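(* Let $n\ge1$ and let $\mathcal{ORCT}_n$ be the semigroup of all full contractions of $[n]=\{1,\dots,n\}$ that are either order-preserving or order-reversing. Let $\textnormal{Reg}(\mathcal{ORCT}_n)$ be the set of regular elements of $\mathcal{ORCT}_n$. Then $$|\textnormal{Reg}(\mathcal{ORCT}_n)|=\frac{n(n-1)(2n-1)+6n}{3}-n.$$
   Context: $\mathcal{T}_n$ is the semigroup (under composition) of all maps $[n]\to[n]$. A map $\alpha\in\mathcal{T}_n$ is a contraction if $|x\alpha-y\alpha|\le |x-y|$ for all $x,y\in[n]$; it is order-preserving if $x\le y$ implies $x\alpha\le y\alpha$, and order-reversing if $x\le y$ implies $x\alpha\ge y\alpha$. $\mathcal{ORCT}_n$ is the set of contractions in $\mathcal{T}_n$ that are order-preserving or order-reversing; it is a subsemigroup of $\mathcal{T}_n$. An element $\alpha\in\mathcal{ORCT}_n$ is regular if there is $\beta\in\mathcal{ORCT}_n$ with $\alpha\beta\alpha=\alpha$. *)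

From mathcomp Require Import all_boot.
Set Implicit Arguments. Unset Strict Implicit. Unset Printing Implicit Defensive.

(* [n] = {1,...,n} is modelled by 'I_n = {0,...,n-1} (a shift, irrelevant for
   distances and order).  Full transformations T_n are {ffun 'I_n -> 'I_n}. *)

Definition ndist (a b : nat) : nat := maxn a b - minn a b.

Definition contraction n (f : {ffun 'I_n -> 'I_n}) : bool :=
  [forall x : 'I_n, forall y : 'I_n, ndist (f x) (f y) <= ndist x y].

Definition order_preserving n (f : {ffun 'I_n -> 'I_n}) : bool :=
  [forall x : 'I_n, forall y : 'I_n, (x <= y) ==> (f x <= f y)].

Definition order_reversing n (f : {ffun 'I_n -> 'I_n}) : bool :=
  [forall x : 'I_n, forall y : 'I_n, (x <= y) ==> (f y <= f x)].

Definition ORCT n (f : {ffun 'I_n -> 'I_n}) : bool :=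
  contraction f && (order_preserving f || order_reversing f).

(* product alpha*beta in the paper's right-action convention: x(ab) = (xa)b *)
Definition tmul n (a b : {ffun 'I_n -> 'I_n}) : {ffun 'I_n -> 'I_n} :=
  [ffun x => b (a x)].

Definition regular_ORCT n (a : {ffun 'I_n -> 'I_n}) : bool :=
  ORCT a && [exists b, ORCT b && (tmul (tmul a b) a == a)].

(* An order-preserving regular element a of ORCT_n is a ramp: constant c up to
   some p, then rising by one at each step until it reaches c + d, then constant.
   Indeed, if a b a = a with b a contraction, then b sends a u to a point <= u when
   a rises at u, and a (w + 1) to a point >= w + 1 when a rises at w; as b cannot
   stretch distances, a rises at every step between two rising steps.  Conversely
   each ramp is regular, the ramp with p and c exchanged being an inverse.  The
   nonconstant ramps are indexed by k = n - d and p, c < k, so there are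
   n + sum_(k < n) k^2 regular order-preserving elements; composing with
   x |-> n - 1 - x matches them with the order-reversing ones, and both families
   share exactly the n constant maps.  Hence |Reg| = 2 (n + sum_(k < n) k^2) - n. *)

From mathcomp Require Import all_boot zify.
Set Implicit Arguments. Unset Strict Implicit. Unset Printing Implicit Defensive.

Definition ramp (p c d x : nat) : nat := minn (maxn (x + c - p) c) (c + d).

Lemma ramp0 p c d : ramp p c d 0 = c.
Proof. rewrite /ramp; lia. Qed.

Lemma ramp_flat p c d x : x <= p -> ramp p c d x = c.
Proof. rewrite /ramp; lia. Qed.

Lemma ramp_top p c d x : p + d <= x -> ramp p c d x = c + d.
Proof. rewrite /ramp; lia. Qed.

Lemma ramp_first_rise p c d : 0 < d -> ramp p c d p.+1 = c.+1.
Proof. rewrite /ramp; lia. Qed.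

Lemma ramp_inj m p c d p' c' d' :
    0 < d -> p + d <= m -> 0 < d' -> p' + d' <= m ->
    (forall x, x <= m -> ramp p c d x = ramp p' c' d' x) ->
  [/\ p = p', c = c' & d = d'].
Proof.
move=> d_gt0 le_pdm d'_gt0 le_pdm' eq_ramp.
have eq_c : c = c' by have := eq_ramp 0 (leq0n m); rewrite !ramp0.
have eq_d : d = d'.
  by have := eq_ramp m (leqnn m); rewrite !ramp_top // eq_c => /addnI.
split=> //; subst c' d'.
have [ltpp'|ltp'p|//] := ltngtP p p'.
  by have := eq_ramp p.+1 ltac:(lia); rewrite ramp_first_rise // ramp_flat //; lia.
by have := eq_ramp p'.+1 ltac:(lia); rewrite ramp_first_rise // ramp_flat //; lia.
Qed.

Lemma ramp_mono p c d x y : x <= y -> ramp p c d x <= ramp p c d y.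
Proof. rewrite /ramp; lia. Qed.

Lemma ramp_lip p c d x y : x <= y -> ramp p c d y <= ramp p c d x + (y - x).
Proof. rewrite /ramp; lia. Qed.

Lemma ramp_range_inverse p c d x : ramp p c d (ramp c p d (ramp p c d x)) = ramp p c d x.
Proof. rewrite /ramp; lia. Qed.

Section RegularRamp.

Variables (m : nat) (A B : nat -> nat).
Hypothesis A_mono : forall x y, x <= y <= m -> A x <= A y.
Hypothesis A_lip : forall x y, x <= y <= m -> A y <= A x + (y - x).
Hypothesis A_le : forall x, x <= m -> A x <= m.
Hypothesis B_le : forall y, y <= m -> B y <= m.
Hypothesis B_contr : forall y z, y <= m -> z <= m -> ndist (B y) (B z) <= ndist y z.
Hypothesis ABA : forall x, x <= m -> A (B (A x)) = A x.

Definition up_step x := (x < m) && (A x.+1 == (A x).+1).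

Lemma flat_or_up_step x : x < m -> A x.+1 = A x \/ up_step x.
Proof.
move=> ltxm; rewrite /up_step ltxm.
have := @A_mono x x.+1; have := @A_lip x x.+1; lia.
Qed.

Lemma up_step_chain u w : u <= w -> up_step u -> up_step w ->
  A w.+1 = A u + (w.+1 - u).
Proof.
move=> le_uw /andP[ltum /eqP upu] /andP[ltwm /eqP upw].
have Au_le := A_le (ltnW ltum); have Aw_le := A_le ltwm.
have BAu_le_m := B_le Au_le; have BAw_le_m := B_le Aw_le.
have BAu_le : B (A u) <= u.
  rewrite leqNgt; apply/negP => ltBu.
  have := @A_mono u.+1 (B (A u)); rewrite ABA; lia.
have BAw_ge : w.+1 <= B (A w.+1).
  rewrite leqNgt; apply/negP => ltBw.
  have := @A_mono (B (A w.+1)) w; rewrite ABA; lia.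
have := @B_contr (A u) (A w.+1); have := @A_mono u w.+1; have := @A_lip u w.+1.
rewrite /ndist; lia.
Qed.

Lemma exists_up_step x y : x <= y -> y <= m -> A x < A y ->
  exists2 w, x <= w < y & up_step w.
Proof.
elim: y => [|y IHy] le_xy le_ym ltA; first by case: x le_xy ltA => // _; rewrite ltnn.
have [eq_xy|ne_xy] := eqVneq x y.+1; first by rewrite eq_xy ltnn in ltA.
have [ltAxy|leAyx] := ltnP (A x) (A y).
  by have [||w] := IHy _ _ ltAxy; [lia | lia | exists w => //; lia].
exists y; first lia.
case: (flat_or_up_step (x := y)) => //; lia.
Qed.

Lemma regular_ramp : A 0 < A m ->
  exists2 p, p + (A m - A 0) <= m &
    forall x, x <= m -> A x = ramp p (A 0) (A m - A 0) x.
Proof.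
move=> ltA0m.
have [w _ upw] := exists_up_step (x := 0) (y := m) (leq0n m) (leqnn m) ltA0m.
case: (ex_minnP (ex_intro up_step w upw)) => p upp p_min.
suff A_ramp : forall x, x <= m -> A x = ramp p (A 0) (A m - A 0) x.
  exists p => //; move/andP: upp => [ltpm _]; have := A_ramp m (leqnn m); rewrite /ramp; lia.
elim=> [|x IHx] lexm; first by rewrite /ramp; lia.
have IH := IHx (ltnW lexm).
have := @A_mono x m; have := @A_mono x.+1 m; have := @A_mono x x.+1.
have [ltxp|lepx] := ltnP x p.
  have: ~~ up_step x by apply/negP => /p_min; lia.
  case: (flat_or_up_step (x := x)) => //; rewrite /ramp in IH *; lia.
have [ltAxm|] := ltnP (A x) (A m); last by rewrite /ramp in IH *; lia.
(* a rises at p and at some w' >= x, hence also at x *)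
have [w' /andP[lexw ltwm] upw'] := exists_up_step (x := x) (y := m) (ltnW lexm) (leqnn m) ltAxm.
have := up_step_chain (leq_trans lepx lexw) upp upw'.
have := @A_lip x.+1 w'.+1; have := @A_lip p x; have := @A_lip x x.+1.
rewrite /ramp in IH *; lia.
Qed.

End RegularRamp.

Section Transformations.

Variable n : nat.
Local Notation T := {ffun 'I_n -> 'I_n}.

Lemma order_preservingP (a : T) : reflect {homo a : x y / x <= y} (order_preserving a).
Proof.
apply: (iffP forallP) => [a_mono x y | a_mono x]; first exact/implyP/(forallP (a_mono x)).
by apply/forallP => y; apply/implyP/a_mono.
Qed.

Lemma order_reversingP (a : T) : reflect {homo a : x y / x <= y >-> y <= x} (order_reversing a).
Proof.
apply: (iffP forallP) => [a_anti x y | a_anti x]; first exact/implyP/(forallP (a_anti x)).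
by apply/forallP => y; apply/implyP/a_anti.
Qed.

Lemma preserving_contractionP (a : T) : order_preserving a ->
  reflect (forall x y : 'I_n, x <= y -> a y <= a x + (y - x)) (contraction a).
Proof.
move=> /order_preservingP a_mono; apply: (iffP forallP) => [a_contr x y le_xy | a_lip x].
  by have := forallP (a_contr x) y; have := a_mono x y le_xy; rewrite /ndist; lia.
apply/forallP => y; rewrite /ndist.
have [le_xy|/ltnW le_yx] := leqP x y.
  by have := a_mono x y le_xy; have := a_lip x y le_xy; lia.
by have := a_mono y x le_yx; have := a_lip y x le_yx; lia.
Qed.

Lemma tmulE (a b : T) x : tmul a b x = b (a x).
Proof. by rewrite ffunE. Qed.

Lemma contraction_tmul (a b : T) : contraction a -> contraction b -> contraction (tmul a b).
Proof.
move=> /forallP ca /forallP cb; apply/forallP => x; apply/forallP => y; rewrite !tmulE.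
exact: leq_trans (forallP (cb (a x)) (a y)) (forallP (ca x) y).
Qed.

Lemma order_preserving_tmul (a b : T) :
  order_preserving a -> order_preserving b -> order_preserving (tmul a b).
Proof.
by move=> /order_preservingP a_mono /order_preservingP b_mono;
  apply/order_preservingP => x y /a_mono /b_mono; rewrite !tmulE.
Qed.

Lemma order_reversing_tmul_pr (a b : T) :
  order_preserving a -> order_reversing b -> order_reversing (tmul a b).
Proof.
by move=> /order_preservingP a_mono /order_reversingP b_anti;
  apply/order_reversingP => x y /a_mono /b_anti; rewrite !tmulE.
Qed.

Lemma order_reversing_tmul_rp (a b : T) :
  order_reversing a -> order_preserving b -> order_reversing (tmul a b).
Proof.
by move=> /order_reversingP a_anti /order_preservingP b_mono;
  apply/order_reversingP => x y /a_anti /b_mono; rewrite !tmulE.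
Qed.

Lemma order_preserving_tmul_rr (a b : T) :
  order_reversing a -> order_reversing b -> order_preserving (tmul a b).
Proof.
by move=> /order_reversingP a_anti /order_reversingP b_anti;
  apply/order_preservingP => x y /a_anti /b_anti; rewrite !tmulE.
Qed.

Lemma ORCT_tmul (a b : T) : ORCT a -> ORCT b -> ORCT (tmul a b).
Proof.
case/andP=> ca oa /andP[cb ob]; rewrite /ORCT contraction_tmul //=.
case/orP: oa => [pa|ra]; case/orP: ob => [pb|rb].
- by rewrite order_preserving_tmul.
- by rewrite order_reversing_tmul_pr ?orbT.
- by rewrite order_reversing_tmul_rp ?orbT.
- by rewrite order_preserving_tmul_rr.
Qed.

Definition rev_ffun : T := [ffun x => rev_ord x].

Lemma rev_ffun_reversing : order_reversing rev_ffun.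
Proof. by apply/order_reversingP => x y le_xy; rewrite !ffunE /= leq_sub2l. Qed.

Lemma ORCT_rev_ffun : ORCT rev_ffun.
Proof.
rewrite /ORCT rev_ffun_reversing orbT andbT.
apply/forallP => x; apply/forallP => y; rewrite !ffunE /= /ndist.
by have := ltn_ord x; have := ltn_ord y; lia.
Qed.

Lemma tmul_revK : involutive (fun a : T => tmul a rev_ffun).
Proof. by move=> a; apply/ffunP => x; rewrite !tmulE !ffunE rev_ordK. Qed.

Lemma regular_tmul_rev (a : T) : regular_ORCT a -> regular_ORCT (tmul a rev_ffun).
Proof.
case/andP=> oa /existsP[b /andP[ob /eqP aba]].
rewrite /regular_ORCT ORCT_tmul ?ORCT_rev_ffun //=; apply/existsP.
exists (tmul rev_ffun b); rewrite ORCT_tmul ?ORCT_rev_ffun //=.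
apply/eqP/ffunP => x; rewrite !tmulE !ffunE rev_ordK.
by have := congr1 (fun f : T => f x) aba; rewrite !tmulE => ->.
Qed.

Definition regular_preserving (a : T) := regular_ORCT a && order_preserving a.
Definition regular_reversing (a : T) := regular_ORCT a && order_reversing a.

Lemma regular_reversing_tmul_rev (a : T) :
  regular_reversing a = regular_preserving (tmul a rev_ffun).
Proof.
apply/andP/andP => [[reg_a ra] | [reg_a pa]].
  by rewrite regular_tmul_rev // order_preserving_tmul_rr ?rev_ffun_reversing.
rewrite -[a]tmul_revK regular_tmul_rev //.
by rewrite order_reversing_tmul_pr ?rev_ffun_reversing.
Qed.

Lemma card_regular_reversing :
  #|[pred a | regular_reversing a]| = #|[pred a | regular_preserving a]|.
Proof.
transitivity #|(fun a : T => tmul a rev_ffun) @^-1: [set a | regular_preserving a]|.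
  by apply: eq_card => a; rewrite !inE regular_reversing_tmul_rev.
by rewrite card_preimset; [apply: eq_card => a; rewrite inE | apply: inv_inj tmul_revK].
Qed.

Definition constant_map (a : T) := [forall x, forall y, a x == a y].

Lemma preserving_reversing_constant (a : T) :
  order_preserving a -> order_reversing a -> constant_map a.
Proof.
move=> /order_preservingP a_mono /order_reversingP a_anti.
apply/forallP => x; apply/forallP => y; rewrite -val_eqE eqn_leq.
have [le_xy | /ltnW le_yx] := leqP x y; apply/andP.
  by split; [apply: a_mono | apply: a_anti].
by split; [apply: a_anti | apply: a_mono].
Qed.

Lemma constant_regular (a : T) :
  constant_map a -> [&& regular_ORCT a, order_preserving a & order_reversing a].
Proof.
move=> /forallP a_const; have aE x y : a x = a y by apply/eqP/(forallP (a_const x)).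
have pa : order_preserving a by apply/order_preservingP => x y _; rewrite (aE x y).
have ra : order_reversing a by apply/order_reversingP => x y _; rewrite (aE x y).
have oa : ORCT a.
  rewrite /ORCT pa andbT; apply/forallP => x; apply/forallP => y.
  by rewrite (aE x y) /ndist maxnn minnn subnn.
rewrite pa ra /regular_ORCT oa !andbT /=; apply/existsP; exists a.
by rewrite oa; apply/eqP/ffunP => x; rewrite !tmulE (aE (a (a x)) x).
Qed.

Lemma card_regular_add_constant :
  #|[pred a : T | regular_ORCT a]| + #|[pred a | constant_map a]| =
    #|[pred a | regular_preserving a]| + #|[pred a | regular_reversing a]|.
Proof.
rewrite -(cardUI [pred a | regular_preserving a]).
congr (_ + _); apply: eq_card => a; rewrite !inE /regular_preserving /regular_reversing.
  by rewrite -andb_orr; case: (boolP (regular_ORCT a)) => // /andP[/andP[]].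
apply/idP/idP => [/constant_regular/and3P[-> -> ->] // | /andP[/andP[_ pa] /andP[_ ra]]].
exact: preserving_reversing_constant.
Qed.

End Transformations.

Section NonemptyDomain.

Variable m : nat.
Local Notation n := m.+1.
Local Notation T := {ffun 'I_n -> 'I_n}.

Lemma card_constant_map : #|[pred a : T | constant_map a]| = n.
Proof.
rewrite -[n in RHS]card_ord -(card_image (f := fun y : 'I_n => [ffun=> y] : T)); last first.
  by move=> y z /ffunP /(_ ord0); rewrite !ffunE.
apply: eq_card => a; rewrite inE; apply/forallP/imageP => [a_const | [y _ ->] x].
  exists (a ord0) => //; apply/ffunP => x; rewrite ffunE; exact/eqP/(forallP (a_const x)).
by apply/forallP => z; rewrite !ffunE.
Qed.

Definition ramp_ffun p c d : T := [ffun x : 'I_n => inord (ramp p c d x)].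

Lemma ramp_ffunE p c d (x : 'I_n) : c + d <= m -> ramp_ffun p c d x = ramp p c d x :> nat.
Proof. by move=> le_cdm; rewrite ffunE inordK // ltnS (leq_trans (geq_minr _ _)). Qed.

Lemma ramp_ffun_preserving p c d : c + d <= m -> order_preserving (ramp_ffun p c d).
Proof.
move=> le_cdm; apply/order_preservingP => x y le_xy; rewrite !ramp_ffunE //.
by apply: ramp_mono.
Qed.

Lemma ORCT_ramp_ffun p c d : c + d <= m -> ORCT (ramp_ffun p c d).
Proof.
move=> le_cdm; have pa := ramp_ffun_preserving p le_cdm.
rewrite /ORCT pa andbT; apply/preserving_contractionP => // x y le_xy.
by rewrite !ramp_ffunE //; apply: ramp_lip.
Qed.

Lemma regular_ramp_ffun p c d : p + d <= m -> c + d <= m ->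
  regular_preserving (ramp_ffun p c d).
Proof.
move=> le_pdm le_cdm; rewrite /regular_preserving ramp_ffun_preserving //.
rewrite andbT /regular_ORCT ORCT_ramp_ffun //=; apply/existsP; exists (ramp_ffun c p d).
rewrite ORCT_ramp_ffun //; apply/eqP/ffunP => x; apply: ord_inj.
by rewrite !tmulE !ramp_ffunE // ramp_range_inverse.
Qed.

Lemma regular_preserving_ramp (a : T) : regular_preserving a -> a ord0 < a ord_max ->
  exists2 p, p + (a ord_max - a ord0) <= m &
    a = ramp_ffun p (a ord0) (a ord_max - a ord0).
Proof.
case/andP=> /andP[/andP[ca _] /existsP[b /andP[/andP[cb _] /eqP aba]]] pa lt_a0m.
have /(preserving_contractionP pa) a_lip := ca; have /order_preservingP a_mono := pa.
pose A x : nat := a (inord x); pose B y : nat := b (inord y).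
have A_mono x y : x <= y <= m -> A x <= A y.
  by case/andP=> le_xy le_ym; apply: a_mono; rewrite !inordK //; lia.
have A_lip x y : x <= y <= m -> A y <= A x + (y - x).
  case/andP=> le_xy le_ym.
  by have := @a_lip (inord x) (inord y); rewrite !inordK //; [apply | lia].
have A_le x : x <= m -> A x <= m by move=> _; rewrite -ltnS ltn_ord.
have B_le y : y <= m -> B y <= m by move=> _; rewrite -ltnS ltn_ord.
have B_contr y z : y <= m -> z <= m -> ndist (B y) (B z) <= ndist y z.
  by move=> le_ym le_zm; have := forallP (forallP cb (inord y)) (inord z); rewrite !inordK.
have ABA x : x <= m -> A (B (A x)) = A x.
  by move=> _; rewrite /A /B !inord_val -[in RHS]aba !tmulE.
have A0 : A 0 = a ord0 by rewrite /A; congr (nat_of_ord (a _)); apply: ord_inj; rewrite inordK.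
have Am : A m = a ord_max by rewrite /A; congr (nat_of_ord (a _)); apply: ord_inj; rewrite inordK.
have [|p le_pdm A_ramp] := regular_ramp A_mono A_lip A_le B_le B_contr ABA; first by rewrite A0 Am.
exists p; first by rewrite -A0 -Am.
apply/ffunP => x; apply: ord_inj.
rewrite ramp_ffunE; last by rewrite subnKC ?(ltnW lt_a0m) // -ltnS.
by have := A_ramp x (ltn_ord x); rewrite A0 Am /A inord_val.
Qed.

(* A ramp rises from c to c + d along [p, p + d]; with k = n - d, the admissible
   positions of each of these two intervals are exactly p < k and c < k. *)
Definition ramp_params : {pred 'I_n * ('I_n * 'I_n)} :=
  [pred t : 'I_n * ('I_n * 'I_n) | (t.2.1 < t.1) && (t.2.2 < t.1)].

Definition ramp_of (t : 'I_n * ('I_n * 'I_n)) : T := ramp_ffun t.2.1 t.2.2 (n - t.1).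

Lemma card_ramp_params : #|ramp_params| = \sum_(k < n) k ^ 2.
Proof.
have card_lt (k : 'I_n) : \sum_(i < n | i < k) 1 = k.
  by rewrite -(big_ord_widen n (fun=> 1) (ltnW (ltn_ord k))) sum1_card card_ord.
pose in_square (k : 'I_n) (pc : 'I_n * 'I_n) := (pc.1 < k) && (pc.2 < k).
rewrite -sum1_card -(pair_big_dep xpredT in_square (fun _ _ => 1)) /=.
apply: eq_bigr => k _.
rewrite -(pair_big (fun p : 'I_n => p < k) (fun c : 'I_n => c < k) (fun _ _ => 1)) /=.
under eq_bigr do rewrite card_lt -[nat_of_ord k]mul1n.
by rewrite -big_distrl /= card_lt.
Qed.

Lemma ramp_params_bounds (t : 'I_n * ('I_n * 'I_n)) : t \in ramp_params ->
  [/\ 0 < n - t.1, t.2.1 + (n - t.1) <= m & t.2.2 + (n - t.1) <= m].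
Proof. by case/andP => lt_pk lt_ck; have := ltn_ord t.1; split; lia. Qed.

Lemma ramp_of_inj : {in ramp_params &, injective ramp_of}.
Proof.
move=> [k [p c]] [k' [p' c']] /ramp_params_bounds[/= d_gt0 le_pdm le_cdm].
move=> /ramp_params_bounds[/= d'_gt0 le_pdm' le_cdm'] /ffunP eq_ramp.
have eq_nat x : x <= m -> ramp p c (n - k) x = ramp p' c' (n - k') x.
  move=> le_xm; have := congr1 (@nat_of_ord n) (eq_ramp (inord x)).
  by rewrite !ramp_ffunE // inordK.
have [eq_p eq_c eq_d] := ramp_inj d_gt0 le_pdm d'_gt0 le_pdm' eq_nat.
by congr (_, (_, _)); apply: ord_inj => //; have := ltn_ord k; have := ltn_ord k'; lia.
Qed.

Lemma preserving_constantE (a : T) :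
  order_preserving a -> constant_map a = (a ord0 == a ord_max).
Proof.
move=> /order_preservingP a_mono.
apply/idP/eqP => [/forallP/(_ ord0)/forallP/(_ ord_max)/eqP // | a0m].
have a_eq0 x : a x = a ord0.
  apply/eqP; rewrite -val_eqE eqn_leq (a_mono ord0 x (leq0n x)) andbT a0m.
  by apply: a_mono; rewrite -ltnS.
by apply/forallP => x; apply/forallP => y; rewrite !a_eq0.
Qed.

Lemma nonconstant_regular_preserving (a : T) :
  (regular_preserving a && ~~ constant_map a) = (a \in ramp_of @: ramp_params).
Proof.
apply/idP/imsetP => [/andP[reg_a] | [t /ramp_params_bounds[d_gt0 le_pdm le_cdm] ->]].
  have pa : order_preserving a by case/andP: reg_a.
  have /order_preservingP a_mono := pa.
  rewrite preserving_constantE // -val_eqE eqn_leq a_mono //= -ltnNge => lt_a0m.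
  have [p le_pdm ->] := regular_preserving_ramp reg_a lt_a0m.
  have le_dm : a ord_max - a ord0 <= m by rewrite -ltnS (leq_ltn_trans (leq_subr _ _)).
  exists (inord (n - (a ord_max - a ord0)), (inord p, a ord0)).
    by rewrite inE /= !inordK; [apply/andP; split | lia | lia]; have := ltn_ord (a ord_max); lia.
  by rewrite /ramp_of /= !inordK ?subKn //; lia.
rewrite regular_ramp_ffun // preserving_constantE ?ramp_ffun_preserving // -val_eqE /=.
by rewrite !ramp_ffunE // ramp0 ramp_top //; lia.
Qed.

Lemma card_regular_preserving :
  #|[pred a : T | regular_preserving a]| = n + \sum_(k < n) k ^ 2.
Proof.
rewrite -(cardID [pred a : T | constant_map a] [pred a : T | regular_preserving a]).
congr (_ + _).
  rewrite -[RHS]card_constant_map; apply: eq_card => a; rewrite !inE.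
  apply/andP/idP => [[] // | a_const]; split=> //.
  by case/and3P: (constant_regular a_const) => reg_a pa _; apply/andP.
rewrite -card_ramp_params -(card_in_imset ramp_of_inj); apply: eq_card => a.
by rewrite !inE andbC nonconstant_regular_preserving.
Qed.

End NonemptyDomain.

Lemma sum_squares n : 6 * \sum_(k < n.+1) k ^ 2 = n * n.+1 * n.*2.+1.
Proof.
elim: n => [|n IHn]; first by rewrite big_ord_recr big_ord0.
by rewrite big_ord_recr /= mulnDr IHn -!mul2n; nia.
Qed.

Theorem corollary3 (n : nat) (hn : 1 <= n) :
  #|[pred a : {ffun 'I_n -> 'I_n} | regular_ORCT a]| =
    (n * (n - 1) * (2 * n - 1) + 6 * n) %/ 3 - n.
Proof.
case: n hn => [//|m] _.
have := card_regular_add_constant m.+1.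
rewrite card_regular_reversing card_regular_preserving card_constant_map.
have := sum_squares m; set S := \sum_(k < m.+1) k ^ 2 => sum_sq card_reg.
have -> : m.+1 * (m.+1 - 1) * (2 * m.+1 - 1) = 6 * S by rewrite sum_sq; nia.
have -> : 6 * S + 6 * m.+1 = (2 * S + 2 * m.+1) * 3 by lia.
by rewrite mulnK //; lia.
Qed.
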